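(* Given $\delta\ge 0$, $D\ge 0$ and $R\ge 0$ there is a constant $D'$ such that the following holds. Let $X$ be a $\delta$-hyperbolic graph (with its natural graph metric) in which every vertex has valence at most $D$, and let $u$ be a vertex of $X$. Let $A\subseteq\partial X$ be a set such that for any three distinct points $\xi_1,\xi_2,\xi_3\in A$, some barycenter of $(\xi_1,\xi_2,\xi_3)$ lies in the closed ball $B(u;R)$, i.e. $\mathrm{Bary}_X(\xi_1,\xi_2,\xi_3)\cap B(u;R)\neq\emptyset$. Then the cardinality of $A$ is at most $D'$.
   Context: For a proper $\delta$-hyperbolic geodesic space $X$ with Gromov boundary $\partial X$, any two distinct $\xi_1\neq\xi_2\in\partial X$ are joined by a bi-infinite geodesic $(\xi_1,\xi_2)$. There are constants $D_0(\delta),R_0(\delta)\ge0$ depending only on $\delta$ such that for every triple of distinct points $\xi_1,\xi_2,\xi_3\in\partial X$ there is a point $x\in X$ whose $D_0(\delta)$-neighborhood meets each of the geodesics $(\xi_i,\xi_j)$, $i\ne j$, and any two such points are within distance $R_0(\delta)$. Any such point is called a barycenter of $(\xi_1,\xi_2,\xi_3)$, and $\mathrm{Bary}_X(\xi_1,\xi_2,\xi_3)$ denotes the (coarsely well-defined) set of barycenters. *)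

From Stdlib Require Import Reals ZArith List ClassicalEpsilon.
Open Scope R_scope.

Section Graph.
Context {V : Type} (adj : V -> V -> Prop).

Inductive reach : V -> V -> nat -> Prop :=
| reach0 x : reach x x 0
| reachS x y z n : adj x y -> reach y z n -> reach x z (S n).

Definition symmetric_rel : Prop := forall x y, adj x y -> adj y x.
Definition irreflexive_rel : Prop := forall x, ~ adj x x.
Definition connected_graph : Prop := forall x y, exists n, reach x y n.

(* combinatorial graph distance = minimal length of a walk (for connected graphs) *)
Definition gdist (x y : V) : nat :=
  epsilon (inhabits 0%nat)
    (fun n => reach x y n /\ forall m, reach x y m -> (n <= m)%nat).
Definition graph_dist (x y : V) : R := INR (gdist x y).

Definition valence_le (D : R) : Prop :=
  forall v (l : list V), NoDup l -> (forall w, In w l -> adj v w) ->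
    INR (length l) <= D.

Definition gromov_product (w x y : V) : R :=
  (graph_dist x w + graph_dist y w - graph_dist x y) / 2.

Definition hyperbolic (delta : R) : Prop :=
  forall w x y z,
    Rmin (gromov_product w x z) (gromov_product w y z) - delta
      <= gromov_product w x y.

Definition geodesic_ray (r : nat -> V) : Prop :=
  forall m n, graph_dist (r m) (r n) = Rabs (INR m - INR n).

Definition bi_geodesic (g : Z -> V) : Prop :=
  forall a b, graph_dist (g a) (g b) = Rabs (IZR a - IZR b).

(* finite Hausdorff distance: equivalence of rays (same point of the Gromov boundary) *)
Definition asymptotic (r s : nat -> V) : Prop :=
  exists K, (forall m, exists n, graph_dist (r m) (s n) <= K) /\
            (forall n, exists m, graph_dist (r m) (s n) <= K).

Definition joins (g : Z -> V) (r1 r2 : nat -> V) : Prop :=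
  bi_geodesic g /\
  asymptotic (fun t => g (- Z.of_nat t)%Z) r1 /\
  asymptotic (fun t => g (Z.of_nat t)) r2.

Definition near_geodesic (D0 : R) (x : V) (r1 r2 : nat -> V) : Prop :=
  exists g, joins g r1 r2 /\ exists t, graph_dist x (g t) <= D0.

Definition barycenter (D0 : R) (x : V) (r1 r2 r3 : nat -> V) : Prop :=
  near_geodesic D0 x r1 r2 /\ near_geodesic D0 x r1 r3 /\
  near_geodesic D0 x r2 r3.

End Graph.

From Stdlib Require Import Reals ZArith List ClassicalEpsilon.
From Stdlib Require Import Classical Wf_nat Lra Lia.
Open Scope R_scope.

(* Fix one point xi_0 of the family.  For every other xi_i take a geodesic
   (xi_0, xi_i) passing within K := Rad + D0 of u, and the point y_i lying L
   steps beyond it towards xi_i.  If y_a = y_b, follow both geodesics far out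
   and jump to the geodesic (xi_a, xi_b), which also passes near u: the
   four-point condition, applied along the chain of points
   far on (xi_a, xi_b) ~ far on (xi_0, xi_a) ~ y ~ far on (xi_0, xi_b) ~ far on (xi_a, xi_b),
   forces L <= 2K + 3 delta.  So for larger L the map i |-> y_i is injective
   into the ball of radius L + K around u, which has at most (1 + D)^(L + K)
   vertices. *)

Lemma exists_nat_gt (x : R) : exists N : nat, x < INR N.
Proof.
  destruct (INR_archimed 1 x Rlt_0_1) as [N HN].
  exists N; lra.
Qed.

Lemma Rabs_bounds (x : R) : - Rabs x <= x <= Rabs x.
Proof. unfold Rabs; destruct (Rcase_abs x); lra. Qed.

Lemma length_flat_map_le {A B : Type} (f : A -> list B) (l : list A) (c : R) :
  (forall a, INR (length (f a)) <= c) ->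
  INR (length (flat_map f l)) <= INR (length l) * c.
Proof.
  intros Hf; induction l as [|a l IH]; cbn [flat_map length].
  - simpl; lra.
  - rewrite length_app, plus_INR, S_INR.
    specialize (Hf a); lra.
Qed.

Lemma injective_seq_length_le {A : Type} (f : nat -> A) (B : list A) (m : nat) :
  (forall i, (i < m)%nat -> In (f i) B) ->
  (forall i j, (i < m)%nat -> (j < m)%nat -> f i = f j -> i = j) ->
  (m <= length B)%nat.
Proof.
  intros HB Hinj.
  replace m with (length (map f (seq 0 m))) by now rewrite length_map, length_seq.
  apply NoDup_incl_length.
  - apply NoDup_map_NoDup_ForallPairs; [|apply seq_NoDup].
    intros i j Hi Hj; apply in_seq in Hi, Hj; apply Hinj; lia.
  - intros v Hv; apply in_map_iff in Hv as [i [<- Hi]].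
    apply in_seq in Hi; apply HB; lia.
Qed.

Section GraphMetric.
Context {V : Type} (adj : V -> V -> Prop).
Hypothesis adj_sym : symmetric_rel adj.
Hypothesis adj_conn : connected_graph adj.

Notation d := (graph_dist adj).
Notation gp := (gromov_product adj).

Lemma reach_app x y z a b :
  reach adj x y a -> reach adj y z b -> reach adj x z (a + b).
Proof. induction 1; simpl; eauto using reach. Qed.

Lemma reach_rev x y n : reach adj x y n -> reach adj y x n.
Proof.
  induction 1 as [|x y z n Hxy _ IH]; [constructor|].
  replace (S n) with (n + 1)%nat by lia.
  eapply reach_app; eauto using reach.
Qed.

Lemma gdist_spec x y :
  reach adj x y (gdist adj x y) /\
  forall m, reach adj x y m -> (gdist adj x y <= m)%nat.
Proof.
  unfold gdist; apply epsilon_spec.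
  destruct (dec_inh_nat_subset_has_unique_least_element (reach adj x y)
              (fun n => classic _) (adj_conn x y)) as [n [Hn _]].
  eauto.
Qed.

Lemma graph_dist_sym x y : d x y = d y x.
Proof.
  unfold graph_dist; f_equal.
  destruct (gdist_spec x y) as [Hxy Hxy_min], (gdist_spec y x) as [Hyx Hyx_min].
  apply reach_rev in Hxy, Hyx.
  specialize (Hxy_min _ Hyx); specialize (Hyx_min _ Hxy); lia.
Qed.

Lemma graph_dist_triangle x y z : d x z <= d x y + d y z.
Proof.
  unfold graph_dist; rewrite <- plus_INR; apply le_INR.
  destruct (gdist_spec x y) as [Hxy _], (gdist_spec y z) as [Hyz _].
  apply (proj2 (gdist_spec x z)); eapply reach_app; eauto.
Qed.

Lemma graph_dist_ge0 x y : 0 <= d x y.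
Proof. apply pos_INR. Qed.

Lemma gromov_product_sym u x y : gp u x y = gp u y x.
Proof. unfold gromov_product; rewrite (graph_dist_sym x y); lra. Qed.

Lemma gromov_product_trans delta u x y z c :
  hyperbolic adj delta -> c <= gp u x y -> c <= gp u y z -> c - delta <= gp u x z.
Proof.
  intros Hhyp Hxy Hyz.
  pose proof (Hhyp u x z y) as H; rewrite (gromov_product_sym u z y) in H.
  pose proof (Rmin_glb _ _ _ Hxy Hyz); lra.
Qed.

Lemma gromov_product_chain delta u x0 x1 x2 x3 x4 c :
  0 <= delta -> hyperbolic adj delta ->
  c <= gp u x0 x1 -> c <= gp u x1 x2 -> c <= gp u x2 x3 -> c <= gp u x3 x4 ->
  c - 3 * delta <= gp u x0 x4.
Proof.
  intros Hd Hhyp H01 H12 H23 H34.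
  assert (H02 := gromov_product_trans _ _ _ _ _ _ Hhyp H01 H12).
  assert (H03 : c - delta - delta <= gp u x0 x3)
    by (apply (gromov_product_trans _ _ _ x2); [|lra|lra]; assumption).
  assert (H04 : c - delta - delta - delta <= gp u x0 x4)
    by (apply (gromov_product_trans _ _ _ x3); [|lra|lra]; assumption).
  lra.
Qed.

Lemma gromov_product_ge_of_close u x y C : d x y <= C -> d x u - C <= gp u x y.
Proof.
  intros H; unfold gromov_product.
  pose proof (graph_dist_triangle x y u); lra.
Qed.

Lemma bi_geodesic_opp g : bi_geodesic adj g -> bi_geodesic adj (fun z => g (- z)%Z).
Proof.
  intros Hg a b; rewrite Hg, !opp_IZR.
  replace (- IZR a - - IZR b) with (- (IZR a - IZR b)) by ring.
  apply Rabs_Ropp.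
Qed.

Lemma bi_geodesic_shift_dist g t L :
  bi_geodesic adj g -> d (g t) (g (t + Z.of_nat L)%Z) = INR L.
Proof.
  intros Hg; rewrite Hg, plus_IZR, <- INR_IZR_INZ.
  replace (IZR t - (IZR t + INR L)) with (- INR L) by ring.
  rewrite Rabs_Ropp; apply Rabs_right, Rle_ge, pos_INR.
Qed.

Lemma bi_geodesic_dist_basepoint g u K t s :
  bi_geodesic adj g -> d u (g t) <= K ->
  Rabs (IZR s - IZR t) - K <= d (g s) u <= Rabs (IZR s - IZR t) + K.
Proof.
  intros Hg Ht; rewrite <- (Hg s t).
  pose proof (graph_dist_triangle (g s) u (g t)).
  pose proof (graph_dist_triangle (g s) (g t) u).
  rewrite (graph_dist_sym (g t) u) in *; lra.
Qed.

Lemma gromov_product_bi_geodesic_ge g u K a b c :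
  bi_geodesic adj g -> d u (g a) <= K -> (a <= b)%Z -> (b <= c)%Z ->
  IZR b - IZR a - K <= gp u (g b) (g c).
Proof.
  intros Hg Ha Hab Hbc; unfold gromov_product.
  apply IZR_le in Hab, Hbc.
  rewrite (Hg b c), Rabs_left1 by lra.
  pose proof (bi_geodesic_dist_basepoint g u K a b Hg Ha).
  pose proof (bi_geodesic_dist_basepoint g u K a c Hg Ha).
  rewrite !Rabs_right in * by lra; lra.
Qed.

Lemma gromov_product_bi_geodesic_le g u K a b c :
  bi_geodesic adj g -> d u (g a) <= K -> (b <= a)%Z -> (a <= c)%Z ->
  gp u (g b) (g c) <= K.
Proof.
  intros Hg Ha Hba Hac; unfold gromov_product.
  apply IZR_le in Hba, Hac.
  rewrite (Hg b c), Rabs_left1 by lra.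
  pose proof (bi_geodesic_dist_basepoint g u K a b Hg Ha).
  pose proof (bi_geodesic_dist_basepoint g u K a c Hg Ha).
  rewrite Rabs_left1 in * by lra; rewrite Rabs_right in * by lra; lra.
Qed.

Lemma asymptotic_sym r s : asymptotic adj r s -> asymptotic adj s r.
Proof.
  intros [C [Hrs Hsr]]; exists C; split; intros m.
  - destruct (Hsr m) as [n Hn]; exists n; now rewrite graph_dist_sym.
  - destruct (Hrs m) as [n Hn]; exists n; now rewrite graph_dist_sym.
Qed.

Lemma asymptotic_trans r s q :
  asymptotic adj r s -> asymptotic adj s q -> asymptotic adj r q.
Proof.
  intros [C1 [Hrs Hsr]] [C2 [Hsq Hqs]]; exists (C1 + C2); split.
  - intros m; destruct (Hrs m) as [k Hk]; destruct (Hsq k) as [n Hn].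
    exists n; pose proof (graph_dist_triangle (r m) (s k) (q n)); lra.
  - intros n; destruct (Hqs n) as [k Hk]; destruct (Hsr k) as [m Hm].
    exists m; pose proof (graph_dist_triangle (r m) (s k) (q n)); lra.
Qed.

Lemma far_points_of_asymptotic g h u K t s c :
  bi_geodesic adj g -> bi_geodesic adj h -> d u (g t) <= K -> d u (h s) <= K ->
  asymptotic adj (fun n => g (Z.of_nat n)) (fun n => h (Z.of_nat n)) ->
  exists N m, c <= IZR N /\ (s <= m)%Z /\ c <= gp u (g N) (h m).
Proof.
  intros Hg Hh Ht Hs [C [Hgh _]].
  destruct (exists_nat_gt (Rabs c + Rabs (IZR t) + Rabs (IZR s) + 2 * K + C)) as [N HN].
  destruct (Hgh N) as [m Hm].
  exists (Z.of_nat N), (Z.of_nat m).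
  pose proof (Rabs_bounds c); pose proof (Rabs_bounds (IZR t)).
  pose proof (Rabs_bounds (IZR s)); pose proof (pos_INR m).
  pose proof (graph_dist_ge0 u (g t)); pose proof (graph_dist_ge0 (g (Z.of_nat N)) (h (Z.of_nat m))).
  assert (HgN := bi_geodesic_dist_basepoint g u K t (Z.of_nat N) Hg Ht).
  assert (Hhm := bi_geodesic_dist_basepoint h u K s (Z.of_nat m) Hh Hs).
  pose proof (Rle_abs (IZR (Z.of_nat N) - IZR t)).
  pose proof (graph_dist_triangle (g (Z.of_nat N)) (h (Z.of_nat m)) u).
  rewrite <- !INR_IZR_INZ in *.
  split; [lra|split].
  - apply le_IZR; rewrite <- INR_IZR_INZ.
    destruct (Rle_lt_dec (IZR s) (INR m)) as [|Hms]; [assumption|].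
    rewrite Rabs_left1 in Hhm by lra; lra.
  - eapply Rle_trans; [|apply gromov_product_ge_of_close; eassumption]; lra.
Qed.

Lemma shared_point_offset_le delta u K L r0 r1 r2 g1 g2 g3 t1 t2 t3 :
  0 <= delta -> hyperbolic adj delta ->
  joins adj g1 r0 r1 -> joins adj g2 r0 r2 -> joins adj g3 r1 r2 ->
  d u (g1 t1) <= K -> d u (g2 t2) <= K -> d u (g3 t3) <= K ->
  g1 (t1 + Z.of_nat L)%Z = g2 (t2 + Z.of_nat L)%Z ->
  INR L <= 2 * K + 3 * delta.
Proof.
  intros Hd Hhyp [Hg1 [_ Hend1]] [Hg2 [_ Hend2]] [Hg3 [Hbeg3 Hend3]] Ht1 Ht2 Ht3 Hy.
  set (g3' := fun z => g3 (- z)%Z).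
  assert (Ht3' : d u (g3' (- t3)%Z) <= K) by (unfold g3'; now rewrite Z.opp_involutive).
  destruct (far_points_of_asymptotic g1 g3' u K t1 (- t3)%Z (Rabs (IZR t1) + INR L)
              Hg1 (bi_geodesic_opp g3 Hg3) Ht1 Ht3'
              (asymptotic_trans _ _ _ Hend1 (asymptotic_sym _ _ Hbeg3)))
    as [N1 [m1 [HN1 [Hm1 HA]]]].
  destruct (far_points_of_asymptotic g2 g3 u K t2 t3 (Rabs (IZR t2) + INR L)
              Hg2 Hg3 Ht2 Ht3 (asymptotic_trans _ _ _ Hend2 (asymptotic_sym _ _ Hend3)))
    as [N2 [m2 [HN2 [Hm2 HB]]]].
  pose proof (Rabs_bounds (IZR t1)); pose proof (Rabs_bounds (IZR t2)).
  pose proof (graph_dist_ge0 u (g1 t1)).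
  assert (HyA : INR L - K <= gp u (g1 N1) (g1 (t1 + Z.of_nat L)%Z)).
  { rewrite gromov_product_sym.
    eapply Rle_trans; [|apply (gromov_product_bi_geodesic_ge g1 u K t1 _ N1 Hg1 Ht1)].
    - rewrite plus_IZR, <- INR_IZR_INZ; lra.
    - lia.
    - apply le_IZR; rewrite plus_IZR, <- INR_IZR_INZ; lra. }
  assert (HyB : INR L - K <= gp u (g2 (t2 + Z.of_nat L)%Z) (g2 N2)).
  { eapply Rle_trans; [|apply (gromov_product_bi_geodesic_ge g2 u K t2 _ N2 Hg2 Ht2)].
    - rewrite plus_IZR, <- INR_IZR_INZ; lra.
    - lia.
    - apply le_IZR; rewrite plus_IZR, <- INR_IZR_INZ; lra. }
  assert (Hends : gp u (g3' m1) (g3 m2) <= K).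
  { apply (gromov_product_bi_geodesic_le g3 u K t3); [assumption..|lia|lia]. }
  assert (Hchain := gromov_product_chain delta u (g3' m1) (g1 N1)
                      (g2 (t2 + Z.of_nat L)%Z) (g2 N2) (g3 m2) (INR L - K) Hd Hhyp).
  rewrite (gromov_product_sym u (g3' m1)) in Hchain; rewrite Hy in HyA.
  assert (INR L - K - 3 * delta <= gp u (g3' m1) (g3 m2)) by (apply Hchain; lra).
  lra.
Qed.

End GraphMetric.

Section Ball.
Context {V : Type} (adj : V -> V -> Prop) (D : R).
Hypothesis adj_sym : symmetric_rel adj.
Hypothesis adj_conn : connected_graph adj.
Hypothesis valence : valence_le adj D.

Lemma neighbour_list_exists w :
  exists l, INR (length l) <= D /\ forall v, adj w v -> In v l.
Proof.
  apply NNPP; intros Hnone.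
  assert (Hgrow : forall k, exists l, NoDup l /\ (forall v, In v l -> adj w v) /\ length l = k).
  { induction k as [|k [l [Hnd [Hl Hlen]]]].
    { exists nil; repeat split; [constructor|intros v []]. }
    destruct (classic (forall v, adj w v -> In v l)) as [Hall|Hmiss].
    - exfalso; apply Hnone; exists l; split; [apply (valence w l)|]; assumption.
    - apply not_all_ex_not in Hmiss as [v Hv]; apply imply_to_and in Hv as [Hwv Hvl].
      exists (v :: l); split; [constructor; auto|split; [|simpl; lia]].
      intros z [<-|Hz]; auto. }
  destruct (exists_nat_gt D) as [k Hk].
  destruct (Hgrow k) as [l [Hnd [Hl Hlen]]].
  pose proof (valence w l Hnd Hl); subst k; lra.
Qed.

Lemma ball_list (u : V) (r : nat) : 0 <= D ->
  exists B : list V, INR (length B) <= (1 + D) ^ r /\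
    forall v, graph_dist adj u v <= INR r -> In v B.
Proof.
  intros HD.
  assert (Hnb : forall w, {l | INR (length l) <= D /\ forall v, adj w v -> In v l})
    by (intros w; apply constructive_indefinite_description, neighbour_list_exists).
  assert (Hreach : exists B : list V, INR (length B) <= (1 + D) ^ r /\
            forall v k, (k <= r)%nat -> reach adj v u k -> In v B).
  { induction r as [|r [B [HBlen HB]]].
    - exists (u :: nil); split; [simpl; lra|].
      intros v k Hk Hv; replace k with 0%nat in Hv by lia; inversion Hv; simpl; auto.
    - exists (B ++ flat_map (fun w => proj1_sig (Hnb w)) B); split.
      + rewrite length_app, plus_INR; simpl pow.
        pose proof (length_flat_map_le (fun w => proj1_sig (Hnb w)) B D
                      (fun w => proj1 (proj2_sig (Hnb w)))).
        pose proof (pos_INR (length B)).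
        pose proof (Rmult_le_compat_r (1 + D) _ _ ltac:(lra) HBlen); lra.
      + intros v k Hk Hv; apply in_or_app.
        destruct (Nat.eq_dec k (S r)) as [->|Hne]; [right|left; apply (HB v k); auto; lia].
        inversion Hv as [|? w ? ? Hvw Hw]; subst.
        apply in_flat_map; exists w; split; [apply (HB w r); auto|].
        apply (proj2 (proj2_sig (Hnb w))), adj_sym, Hvw. }
  destruct Hreach as [B [HBlen HB]]; exists B; split; [assumption|].
  intros v Hv; destruct (gdist_spec adj adj_conn u v) as [Huv _].
  apply (HB v (gdist adj u v)); [apply INR_le, Hv|now apply reach_rev].
Qed.

End Ball.

Definition passes_near {V : Type} (adj : V -> V -> Prop) (K : R) (u : V)
  (r1 r2 : nat -> V) : Prop :=
  exists g t, joins adj g r1 r2 /\ graph_dist adj u (g t) <= K.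

Lemma barycenter_passes_near {V : Type} (adj : V -> V -> Prop) D0 Rad u x r1 r2 r3 :
  connected_graph adj -> barycenter adj D0 x r1 r2 r3 -> graph_dist adj u x <= Rad ->
  passes_near adj (Rad + D0) u r1 r2 /\ passes_near adj (Rad + D0) u r1 r3 /\
  passes_near adj (Rad + D0) u r2 r3.
Proof.
  intros Hconn Hbar Hux.
  assert (Hnear : forall s1 s2, near_geodesic adj D0 x s1 s2 ->
                    passes_near adj (Rad + D0) u s1 s2).
  { intros s1 s2 [g [Hg [t Ht]]]; exists g, t; split; [assumption|].
    pose proof (graph_dist_triangle adj Hconn u x (g t)); lra. }
  destruct Hbar as [H12 [H13 H23]]; auto.
Qed.

Section BoundaryFamily.
Context {V : Type} (adj : V -> V -> Prop) (D delta K : R) (u : V) (L n : nat)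
  (xi : nat -> nat -> V).
Hypothesis adj_sym : symmetric_rel adj.
Hypothesis adj_conn : connected_graph adj.
Hypothesis valence : valence_le adj D.
Hypothesis D_ge0 : 0 <= D.
Hypothesis delta_ge0 : 0 <= delta.
Hypothesis hyp : hyperbolic adj delta.
Hypothesis L_large : 2 * K + 3 * delta < INR L.
Hypothesis n_ge3 : (3 <= n)%nat.
Hypothesis near_triples : forall i j k, (i < n)%nat -> (j < n)%nat -> (k < n)%nat ->
  i <> j -> i <> k -> j <> k ->
  passes_near adj K u (xi i) (xi j) /\ passes_near adj K u (xi i) (xi k) /\
  passes_near adj K u (xi j) (xi k).

Definition offset_point (i : nat) (y : V) : Prop :=
  exists g t, joins adj g (xi 0%nat) (xi i) /\ graph_dist adj u (g t) <= K /\
              y = g (t + Z.of_nat L)%Z.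

Definition anchor (i : nat) : V := epsilon (inhabits u) (offset_point i).

Lemma anchor_spec i : (1 <= i < n)%nat -> offset_point i (anchor i).
Proof.
  intros Hi; unfold anchor; apply epsilon_spec.
  set (k := if Nat.eq_dec i 1 then 2%nat else 1%nat).
  assert (Hk : (k < n)%nat /\ k <> 0%nat /\ k <> i) by (unfold k; destruct Nat.eq_dec; lia).
  destruct (near_triples 0 i k) as [[g [t [Hg Ht]]] _]; try lia.
  exists (g (t + Z.of_nat L)%Z), g, t; auto.
Qed.

Lemma anchor_injective a b : (1 <= a < n)%nat -> (1 <= b < n)%nat ->
  anchor a = anchor b -> a = b.
Proof.
  intros Ha Hb Hab; apply NNPP; intros Hne.
  destruct (anchor_spec a Ha) as [g1 [t1 [Hg1 [Ht1 Hy1]]]].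
  destruct (anchor_spec b Hb) as [g2 [t2 [Hg2 [Ht2 Hy2]]]].
  destruct (near_triples 0 a b) as [_ [_ [g3 [t3 [Hg3 Ht3]]]]]; try lia.
  assert (INR L <= 2 * K + 3 * delta); [|lra].
  apply (shared_point_offset_le adj adj_sym adj_conn delta u K L (xi 0%nat) (xi a) (xi b) g1 g2 g3 t1 t2 t3);
    try assumption.
  congruence.
Qed.

Lemma anchor_dist i : (1 <= i < n)%nat -> graph_dist adj u (anchor i) <= INR L + K.
Proof.
  intros Hi; destruct (anchor_spec i Hi) as [g [t [[Hg _] [Ht ->]]]].
  pose proof (graph_dist_triangle adj adj_conn u (g t) (g (t + Z.of_nat L)%Z)).
  rewrite (bi_geodesic_shift_dist adj g t L Hg) in *; lra.
Qed.

Lemma boundary_family_size_le r : INR L + K <= INR r -> INR (n - 1) <= (1 + D) ^ r.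
Proof.
  intros Hr.
  destruct (ball_list adj D adj_sym adj_conn valence u r D_ge0) as [B [HBlen HB]].
  eapply Rle_trans; [apply le_INR|exact HBlen].
  apply (injective_seq_length_le (fun i => anchor (S i))).
  - intros i Hi; apply HB.
    pose proof (anchor_dist (S i) ltac:(lia)); lra.
  - intros i j Hi Hj Hij; apply anchor_injective in Hij; lia.
Qed.

End BoundaryFamily.

Theorem proposition2p4 :
  forall (delta D Rad D0 : R), 0 <= delta -> 0 <= D -> 0 <= Rad -> 0 <= D0 ->
  exists D' : nat,
    forall (V : Type) (adj : V -> V -> Prop),
      symmetric_rel adj -> irreflexive_rel adj -> connected_graph adj ->
      valence_le adj D -> hyperbolic adj delta ->
      forall (u : V) (n : nat) (xi : nat -> nat -> V),
        (forall i, (i < n)%nat -> geodesic_ray adj (xi i)) ->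
        (forall i j, (i < n)%nat -> (j < n)%nat -> i <> j ->
           ~ asymptotic adj (xi i) (xi j)) ->
        (forall i j k, (i < n)%nat -> (j < n)%nat -> (k < n)%nat ->
           i <> j -> i <> k -> j <> k ->
           exists x, barycenter adj D0 x (xi i) (xi j) (xi k) /\
                     graph_dist adj u x <= Rad) ->
        (n <= D')%nat.
Proof.
  intros delta D Rad D0 Hdelta HD HRad HD0.
  destruct (exists_nat_gt (2 * (Rad + D0) + 3 * delta)) as [L HL].
  destruct (exists_nat_gt (INR L + (Rad + D0))) as [r Hr].
  destruct (exists_nat_gt ((1 + D) ^ r)) as [M HM].
  exists (M + 2)%nat.
  intros V adj Hsym _ Hconn Hval Hhyp u n xi _ _ Hbar.
  destruct (Nat.le_gt_cases n 2) as [|Hn]; [lia|].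
  assert (Hsize : INR (n - 1) <= (1 + D) ^ r).
  { apply (boundary_family_size_le adj D delta (Rad + D0) u L n xi); try (assumption || lra).
    intros i j k Hi Hj Hk Hij Hik Hjk.
    destruct (Hbar i j k Hi Hj Hk Hij Hik Hjk) as [x [Hx Hux]].
    exact (barycenter_passes_near adj D0 Rad u x _ _ _ Hconn Hx Hux). }
  assert (n - 1 < M)%nat by (apply INR_lt; lra).
  lia.
Qed.
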